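(* Let $(\Gamma,M)$ be an E-GCM graph, let $\lambda$ be a strongly dominant position, and let $(\gamma_{i_1},\gamma_{i_2},\dots)$ be any game sequence for a numbers game played from $\lambda$. For each $j$ let $\beta_j:=s_{i_1}\cdots s_{i_{j-1}}.\alpha_{i_j}$ (a positive root), so that $\phi_{\beta_j}$ is the positive root functional at node $\gamma_{i_j}$. Then for all $k\ge1$ and all $1\le j<k$, $\phi_{\beta_k}\ne\phi_{\beta_j}$.
   Context: E-GCM $M=(M_{ij})_{i,j\in I_n}$: real, $M_{ii}=2$, $M_{ij}\le0$ ($i\ne j$), $M_{ij}\ne0\iff M_{ji}\ne0$, nonzero $M_{ij}M_{ji}$ either $\ge4$ or $=4\cos^2(\pi/m)$ with $m\ge3$ integer; nodes $\gamma_i$, adjacent iff $M_{ij}\ne0$. Positions $\lambda\in\mathbb{R}^n$, strongly dominant if all $\lambda_i>0$; firing $\gamma_i$ allowed iff $\lambda_i>0$ and replaces $\lambda_j$ by $\lambda_j-M_{ij}\lambda_i$; a game sequence is the sequence of nodes fired in a numbers game that keeps firing nodes with positive population while any exist. $W$: Coxeter group with generators $s_i$, $s_i^2=e$, $(s_is_j)^{m_{ij}}=e$, $m_{ij}=k$ if $M_{ij}M_{ji}=4\cos^2(\pi/k)$ ($k\ge2$), $m_{ij}=\infty$ if $M_{ij}M_{ji}\ge4$. $W$ acts on real $V$ with basis $(\alpha_i)$ via $s_i.\alpha_j=\alpha_j-M_{ij}\alpha_i$; roots are the elements $w.\alpha_i$. For a root $\alpha=\sum c_i\alpha_i$, the root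 functional is $\phi_\alpha(x_1,\dots,x_n)=\sum c_ix_i$ (indeterminates $x_i$); it is positive if all $c_i\ge 0$. *)

From HB Require Import structures.
From mathcomp Require Import all_boot all_order all_algebra.
From mathcomp Require Import all_classical all_reals all_analysis.
Set Implicit Arguments. Unset Strict Implicit. Unset Printing Implicit Defensive.
Import Order.TTheory GRing.Theory Num.Theory.
Local Open Scope ring_scope.

Section Defs.
Variable R : realType.
Variable n : nat.

Definition EGCM (M : 'M[R]_n) : Prop :=
  (forall i, M i i = 2) /\
  (forall i j, i != j -> M i j <= 0) /\
  (forall i j, M i j != 0 <-> M j i != 0) /\
  (forall i j, i != j -> M i j * M j i != 0 ->
     4 <= M i j * M j i \/
     exists m : nat, (3 <= m)%N /\ M i j * M j i = 4 * (cos (pi / m%:R)) ^+ 2).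

Definition strongly_dominant (lam : 'I_n -> R) : Prop := forall i, 0 < lam i.

Definition fire (M : 'M[R]_n) (i : 'I_n) (lam : 'I_n -> R) : 'I_n -> R :=
  fun j => lam j - M i j * lam i.

Fixpoint play (M : 'M[R]_n) (lam : 'I_n -> R) (g : nat -> 'I_n) (t : nat)
  : 'I_n -> R :=
  match t with
  | 0 => lam
  | t'.+1 => fire M (g t') (play M lam g t')
  end.

(* t is an index within the (possibly infinite, len = None) sequence *)
Definition in_range (len : option nat) (t : nat) : Prop :=
  match len with None => True | Some N => (t < N)%N end.

(* game sequence (0-indexed g 0, g 1, ...) of length len played from lam:
   every firing is legal, and if the sequence is finite the game has
   terminated (no node has positive population). *)
Definition game_sequence (M : 'M[R]_n) (lam : 'I_n -> R)
    (len : option nat) (g : nat -> 'I_n) : Prop :=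
  (forall t, in_range len t -> 0 < play M lam g t (g t)) /\
  (forall N, len = Some N -> forall i, play M lam g N i <= 0).

(* vectors of V in coordinates w.r.t. the basis (alpha_i) *)
Definition alpha (i : 'I_n) : 'I_n -> R := fun j => if j == i then 1 else 0.

(* s_i . v = v - (sum_j M_ij v_j) alpha_i ,  so that s_i.alpha_j = alpha_j - M_ij alpha_i *)
Definition refl (M : 'M[R]_n) (i : 'I_n) (v : 'I_n -> R) : 'I_n -> R :=
  fun k => v k - (\sum_j M i j * v j) * alpha i k.

Definition wact (M : 'M[R]_n) (l : seq 'I_n) (v : 'I_n -> R) : 'I_n -> R :=
  foldr (refl M) v l.

Definition beta (M : 'M[R]_n) (g : nat -> 'I_n) (t : nat) : 'I_n -> R :=
  wact M [seq g k | k <- iota 0 t] (alpha (g t)).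

Definition root_functional (a : 'I_n -> R) : ('I_n -> R) -> R :=
  fun x => \sum_i a i * x i.

End Defs.

(* Write w_t = s_{g 0} ... s_{g (t-1)}, so that beta_t = w_t alpha_{g t}.  Reflections act
   on roots contragrediently to firings on positions, hence phi_{beta_t}(lambda) is the
   population fired at step t.  By induction on t, w_t^-1 beta_m is a nonpositive root for all
   m < t: s_{g t} maps a nonpositive root to a nonpositive root unless the root is c alpha_{g t},
   and then c <= 0 and beta_m = c beta_t would make the populations fired at steps m and t of
   opposite signs.  So w_k^-1 beta_j <= 0 < alpha_{g k} = w_k^-1 beta_k whenever j < k.

   That every root is nonnegative or nonpositive is Deodhar's argument (Humphreys, Reflection
   Groups and Coxeter Groups, 5.4): if l(w s) >= l(w) and s' is the last letter of w, write
   w = p q with q a word in s, s' and p as short as possible; induction applies to p, and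
   q alpha_s is a nonnegative combination of alpha_s and alpha_s' because q is shorter than the
   order of s s'.  In rank two these coefficients are Chebyshev-like sequences: when
   M_xy M_yx = 4 cos^2 (pi/m) they are proportional to sin (k pi/m), nonnegative up to k = m
   where they vanish and yield the braid relation; when M_xy M_yx >= 4 they stay nonnegative. *)

From HB Require Import structures.
From mathcomp Require Import all_boot all_order all_algebra.
From mathcomp Require Import all_classical all_reals all_analysis.
From mathcomp Require Import ring lra zify.
Set Implicit Arguments. Unset Strict Implicit. Unset Printing Implicit Defensive.
Import Order.TTheory GRing.Theory Num.Theory.
Local Open Scope ring_scope.

Section Reflections.
Variables (R : realType) (n : nat) (M : 'M[R]_n).
Hypothesis M_diag : forall i, M i i = 2.

Definition coroot (i : 'I_n) (v : 'I_n -> R) : R := \sum_j M i j * v j.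

Definition nonneg (v : 'I_n -> R) : Prop := forall k, 0 <= v k.

Lemma scalevE (a : R) (v : 'I_n -> R) k : (a *: v) k = a * v k.
Proof. by []. Qed.

Lemma alpha_nonneg j : nonneg (alpha R j).
Proof. by move=> k; rewrite /alpha; case: ifP. Qed.

Lemma root_functional_alpha (u : 'I_n -> R) j : root_functional u (alpha R j) = u j.
Proof.
rewrite /root_functional (bigD1 j) //= big1 ?addr0; first by rewrite /alpha eqxx mulr1.
by move=> k /negbTE kj; rewrite /alpha kj mulr0.
Qed.

Lemma root_functional_of_alpha j (x : 'I_n -> R) : root_functional (alpha R j) x = x j.
Proof.
by rewrite -(root_functional_alpha x); apply: eq_bigr => k _; rewrite mulrC.
Qed.

Lemma root_functional_scale c u (x : 'I_n -> R) :
  root_functional (c *: u) x = c * root_functional u x.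
Proof. by rewrite /root_functional mulr_sumr; apply: eq_bigr => k _; rewrite scalevE mulrA. Qed.

Lemma coroot_alpha i j : coroot i (alpha R j) = M i j.
Proof. exact: (root_functional_alpha (M i)). Qed.

Lemma coroot_is_linear i : linear (coroot i).
Proof.
move=> a u v; rewrite /coroot scaler_sumr -big_split; apply: eq_bigr => k _ /=.
by rewrite mulrDr mulrCA.
Qed.

HB.instance Definition _ i :=
  GRing.isLinear.Build R ('I_n -> R) R *%R (coroot i) (coroot_is_linear i).

Lemma reflE i v : refl M i v = v - coroot i v *: alpha R i.
Proof. by []. Qed.

Lemma refl_is_linear i : linear (refl M i).
Proof.
by move=> a u v; rewrite !reflE linearP /= scalerDl scalerBr scalerA opprD addrACA.
Qed.

HB.instance Definition _ i :=
  GRing.isLinear.Build R ('I_n -> R) ('I_n -> R) *:%R (refl M i) (refl_is_linear i).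

Lemma wact_is_linear l : linear (wact M l).
Proof. by elim: l => [|i l IH] a u v //=; rewrite IH linearP. Qed.

HB.instance Definition _ l :=
  GRing.isLinear.Build R ('I_n -> R) ('I_n -> R) *:%R (wact M l) (wact_is_linear l).

Lemma refl_alpha i j : refl M i (alpha R j) = alpha R j - M i j *: alpha R i.
Proof. by rewrite reflE coroot_alpha. Qed.

Lemma refl_alpha_self i : refl M i (alpha R i) = - alpha R i.
Proof. by rewrite refl_alpha M_diag scalerDl scale1r opprD addrA subrr add0r. Qed.

Lemma coroot_refl_self i v : coroot i (refl M i v) = - coroot i v.
Proof.
by rewrite reflE linearB linearZ /= coroot_alpha M_diag mulr_natr mulr2n opprD addrA subrr add0r.
Qed.

Lemma reflK i : involutive (refl M i).
Proof. by move=> v; rewrite [LHS]reflE coroot_refl_self scaleNr opprK reflE subrK. Qed.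

Lemma refl_coord_neq i v k : k != i -> refl M i v k = v k.
Proof. by move=> /negbTE ki; rewrite /refl /alpha ki mulr0 subr0. Qed.

Lemma nonpos_refl_nonneg i v :
  nonneg (- v) -> nonneg (refl M i v) -> v = v i *: alpha R i.
Proof.
move=> v_le0 rv_ge0; apply/funext => k; rewrite scalevE /alpha.
have [-> | ki] := eqVneq k i; first by rewrite mulr1.
have := v_le0 k; have := rv_ge0 k; rewrite refl_coord_neq // mulr0 => ? ?.
by apply/eqP; rewrite eq_le; apply/andP; split; rewrite // -oppr_ge0.
Qed.

Lemma wact_cat l1 l2 : wact M (l1 ++ l2) = wact M l1 \o wact M l2.
Proof. by apply/funext => v; rewrite /wact foldr_cat. Qed.

Lemma wact_rcons l a : wact M (rcons l a) = wact M l \o refl M a.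
Proof. by rewrite -cats1 wact_cat. Qed.

Lemma wact_rcons2 l a : wact M (rcons (rcons l a) a) = wact M l.
Proof. by apply/funext => v; rewrite !wact_rcons /= reflK. Qed.

Lemma wact_cons2 l a : wact M (a :: a :: l) = wact M l.
Proof. by apply/funext => v /=; rewrite reflK. Qed.

Lemma wact_revK l : cancel (wact M l) (wact M (rev l)).
Proof. by elim: l => //= a l IH v; rewrite rev_cons wact_rcons /= reflK IH. Qed.

Lemma wact_Krev l : cancel (wact M (rev l)) (wact M l).
Proof. by move=> v; rewrite -{1}(revK l) wact_revK. Qed.

End Reflections.

Lemma eq_of_mem2 (T : eqType) (s s' a b c : T) :
  a \in [:: s; s'] -> b \in [:: s; s'] -> c \in [:: s; s'] -> a != c -> b != c -> a = b.
Proof. by rewrite !inE => /orP[]/eqP-> /orP[]/eqP-> /orP[]/eqP->; rewrite ?eqxx. Qed.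

Section Words.
Variables (R : realType) (n : nat) (M : 'M[R]_n).
Hypothesis M_diag : forall i, M i i = 2.

Definition reduced (l : seq 'I_n) : Prop :=
  forall l', wact M l' = wact M l -> (size l <= size l')%N.

Definition ascent (l : seq 'I_n) (s : 'I_n) : Prop :=
  forall l', wact M l' = wact M (rcons l s) -> (size l <= size l')%N.

Lemma exists_reduced l : exists2 l', wact M l' = wact M l & reduced l'.
Proof.
pose A : set nat := [set k | exists2 l', size l' = k & wact M l' = wact M l]%classic.
have A_l : A (size l) by exists l.
have [_ [[l' <- e] min_l']] := nat_has_minimum (ex_intro _ _ A_l).
exists l' => // l'' e''; apply: min_l'; exists l'' => //; exact: etrans e'' e.
Qed.

Lemma reduced_catl p q : reduced (p ++ q) -> reduced p.
Proof.
move=> red p' e; have := red (p' ++ q).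
by rewrite !wact_cat e !size_cat leq_add2r => /(_ erefl).
Qed.

Lemma reduced_catr p q : reduced (p ++ q) -> reduced q.
Proof.
move=> red q' e; have := red (p ++ q').
by rewrite !wact_cat e !size_cat leq_add2l => /(_ erefl).
Qed.

Lemma not_reduced_square l1 l2 a : ~ reduced (l1 ++ a :: a :: l2).
Proof.
move=> red; have := red (l1 ++ l2).
rewrite !wact_cat wact_cons2 //.
by move/(_ erefl); rewrite !size_cat /=; lia.
Qed.

Lemma not_ascent_last l l0 s :
  wact M l = wact M (rcons l0 s) -> size l = (size l0).+1 -> ~ ascent l s.
Proof.
move=> e sz asc; have := asc l0; rewrite !wact_rcons e -wact_rcons wact_rcons2 // sz.
by move/(_ erefl); rewrite ltnn.
Qed.

Lemma ascent_catr p q w s :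
  wact M (p ++ q) = wact M w -> size (p ++ q) = size w -> ascent w s -> ascent q s.
Proof.
move=> e sz asc q' e'.
have e2 : wact M (p ++ q') = wact M (rcons w s).
  by rewrite wact_cat e' -wact_cat -rcons_cat !wact_rcons e.
by have := asc _ e2; rewrite -sz !size_cat leq_add2l.
Qed.

Definition alt_letter (x y : 'I_n) (i : nat) : 'I_n := if odd i then y else x.

Fixpoint alt (x y : 'I_n) (L : nat) : seq 'I_n :=
  if L is L'.+1 then x :: alt y x L' else [::].

Lemma size_alt x y L : size (alt x y L) = L.
Proof. by elim: L x y => //= L IH x y; rewrite IH. Qed.

Lemma alt_letterS x y i : alt_letter x y i.+1 = alt_letter y x i.
Proof. by rewrite /alt_letter /=; case: (odd i). Qed.

Lemma alt_letter_in x y i : alt_letter x y i \in [:: x; y].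
Proof. by rewrite /alt_letter !inE; case: (odd i); rewrite eqxx ?orbT. Qed.

Lemma alt_letter_neq x y i : x != y -> alt_letter x y i.+1 != alt_letter x y i.
Proof. by move=> xy; rewrite /alt_letter /=; case: (odd i); rewrite // eq_sym. Qed.

Lemma alt_rcons x y L : alt x y L.+1 = rcons (alt x y L) (alt_letter x y L).
Proof. by elim: L x y => //= L IH x y; rewrite IH alt_letterS. Qed.

Lemma alt_cat x y k j :
  alt x y (k + j) = alt x y k ++ alt (alt_letter x y k) (alt_letter y x k) j.
Proof. by elim: k x y => //= k IH x y; rewrite IH !alt_letterS. Qed.

Lemma square_free_alt s s' q : s != s' -> all (mem [:: s; s']) q ->
    (forall q1 q2 a, q <> q1 ++ a :: a :: q2) ->
  exists x y, [/\ q = alt x y (size q), x != y & {subset [:: x; y] <= [:: s; s']}].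
Proof.
move=> ss'; elim: q => [|a q IH] /=.
  by exists s, s'; split => // t.
case/andP => a_in q_in sqf.
have [x [y [eq_q xy sub]]] := IH q_in (fun q1 q2 b E => sqf (a :: q1) q2 b (congr1 _ E)).
rewrite {}eq_q /= size_alt in sqf *; case: (size q) sqf => [|L] /= sqf.
  move: a_in; rewrite !inE => /orP[]/eqP->; first by exists s, s'; split => // t.
  exists s', s; split; rewrite // 1?eq_sym // => t.
  by rewrite !inE orbC.
have ax : a != x by apply/eqP => ax; apply: (sqf [::] (alt y x L) a); rewrite ax.
have ay : a = y by apply: (eq_of_mem2 a_in (sub y _) (sub x _)); rewrite ?inE ?eqxx ?orbT // eq_sym.
exists y, x; rewrite ay; split => //; first by rewrite eq_sym.
by move=> t t_in; apply: sub; move: t_in; rewrite !inE orbC.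
Qed.

End Words.

(** * Rank-two subsystems *)

Section Chebyshev.
Variable R : realType.

(* For A = B = 2 cos th, cheb k A B = sin (k th) / sin th. *)
Fixpoint cheb (k : nat) (A B : R) : R :=
  if k is k1.+1 then (if k1 is k'.+1 then A * cheb k1 B A - cheb k' A B else 1)
  else 0.

Lemma cheb0 A B : cheb 0 A B = 0.
Proof. by []. Qed.

Lemma cheb1 A B : cheb 1 A B = 1.
Proof. by []. Qed.

Lemma chebSS k A B : cheb k.+2 A B = A * cheb k.+1 B A - cheb k A B.
Proof. by []. Qed.

Definition cheb_nonneg (A B : R) (k : nat) : Prop :=
  0 <= cheb k A B /\ 0 <= cheb k B A.

(* In the second case m is the order of s_x s_y when A = - M x y and B = - M y x. *)
Definition cheb_admissible (A B : R) : Prop :=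
  (forall k, cheb_nonneg A B k) \/
  exists m, [/\ (0 < m)%N, forall k, (k <= m)%N -> cheb_nonneg A B k,
    cheb m A B = 0, cheb m B A = 0 & A * B != 4].

End Chebyshev.

Section Dihedral.
Variables (R : realType) (n : nat) (M : 'M[R]_n).
Hypothesis M_diag : forall i, M i i = 2.

Lemma wact_alt_alpha x y L : x != y ->
  wact M (alt x y L) (alpha R (alt_letter x y L)) =
  cheb L.+1 (- M x y) (- M y x) *: alpha R x + cheb L (- M y x) (- M x y) *: alpha R y.
Proof.
elim: L x y => [|L IH] x y xy; first by rewrite /= scale1r scale0r addr0.
rewrite alt_letterS [wact _ _ _]/= IH 1?eq_sym // chebSS.
set b := cheb L.+1 _ _; set c := cheb L _ _.
rewrite linearD !linearZ /= refl_alpha refl_alpha_self //.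
by apply/funext => k; rewrite !fctE /GRing.scale /=; ring.
Qed.
Lemma wact_alt_fixed x y L h :
  refl M x h = h -> refl M y h = h -> wact M (alt x y L) h = h.
Proof. by elim: L x y => //= L IH x y hx hy; rewrite IH. Qed.

Lemma braid_alpha_last x y m : x != y -> cheb m.+1 (- M x y) (- M y x) = 0 ->
  wact M (alt x y m.+1) (alpha R (alt_letter x y m)) =
  wact M (alt y x m.+1) (alpha R (alt_letter x y m)).
Proof.
move=> xy h.
have -> : wact M (alt x y m.+1) (alpha R (alt_letter x y m)) =
          - (cheb m (- M y x) (- M x y) *: alpha R y).
  rewrite alt_rcons wact_rcons /= refl_alpha_self // linearN /= wact_alt_alpha //.
  by rewrite h scale0r add0r.
rewrite -alt_letterS wact_alt_alpha 1?eq_sym // chebSS h.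
by rewrite mulr0 sub0r scale0r addr0 scaleNr.
Qed.

Lemma braid x y m : x != y ->
  cheb m (- M x y) (- M y x) = 0 -> cheb m (- M y x) (- M x y) = 0 ->
  M x y * M y x != 4 -> wact M (alt x y m) = wact M (alt y x m).
Proof.
(* Split v = h + p with p in the span of alpha_x, alpha_y and h fixed by s_x and s_y, which is
   possible since M_xy M_yx != 4; both words fix h and agree on alpha_x and alpha_y. *)
case: m => [//|m] xy hxy hyx D.
have on_alpha z : z \in [:: x; y] ->
    wact M (alt x y m.+1) (alpha R z) = wact M (alt y x m.+1) (alpha R z).
  move=> z_in; have [->|->] : z = alt_letter x y m \/ z = alt_letter y x m.
    by move: z_in; rewrite /alt_letter !inE; case: (odd m) => /orP[]/eqP->; auto.
  - exact: braid_alpha_last.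
  - by rewrite braid_alpha_last // eq_sym.
have D0 : 4 - M x y * M y x != 0 by rewrite subr_eq0 eq_sym.
apply/funext => v.
pose c1 := (2 * coroot M x v - M x y * coroot M y v) / (4 - M x y * M y x).
pose c2 := (2 * coroot M y v - M y x * coroot M x v) / (4 - M x y * M y x).
pose h := v - (c1 *: alpha R x + c2 *: alpha R y).
have fixed z : z \in [:: x; y] -> refl M z h = h.
  move=> z_in; rewrite reflE; suff -> : coroot M z h = 0 by rewrite scale0r subr0.
  rewrite /h linearB linearD !linearZ /= !coroot_alpha /c1 /c2.
  by move: z_in; rewrite !inE => /orP[]/eqP->; rewrite M_diag; field.
have Ev : v = h + (c1 *: alpha R x + c2 *: alpha R y) by rewrite subrK.
have fx := fixed x; have fy := fixed y; rewrite !inE !eqxx ?orbT in fx fy.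
have := wact_alt_fixed m.+1 (fx isT) (fy isT).
have := wact_alt_fixed m.+1 (fy isT) (fx isT).
clearbody h; move: (alt x y m.+1) (alt y x m.+1) on_alpha => l1 l2 on_alpha f2 f1.
by rewrite Ev !linearD !linearZ /= f1 f2 !on_alpha // !inE eqxx ?orbT.
Qed.

End Dihedral.

(** * Roots are nonnegative or nonpositive *)

Section PositiveRoots.
Variables (R : realType) (n : nat) (M : 'M[R]_n).
Hypothesis M_diag : forall i, M i i = 2.
Hypothesis M_admissible : forall x y, x != y -> cheb_admissible (- M x y) (- M y x).

Lemma alt_shorten x y m L : wact M (alt x y m.+1) = wact M (alt y x m.+1) ->
  (m <= L)%N -> exists2 r, wact M r = wact M (alt x y L.+2) & size r = L.
Proof.
move=> br mL; have -> : L.+2 = ((L - m) + m.+2)%N by lia.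
set u := alt_letter x y (L - m); set v := alt_letter y x (L - m).
have br' : wact M (alt u v m.+1) = wact M (alt v u m.+1).
  by rewrite /u /v /alt_letter; case: (odd _).
have e : wact M (alt u v m.+2) = wact M (alt v u m).
  by rewrite alt_rcons wact_rcons br' -wact_rcons alt_rcons alt_letterS wact_rcons2.
exists (alt x y (L - m) ++ alt v u m); first by rewrite alt_cat !wact_cat e.
by rewrite size_cat !size_alt; lia.
Qed.

Lemma alt_ascent_alpha x y s L : x != y -> s \in [:: x; y] ->
    ascent M (alt x y L.+1) s ->
  exists a b, [/\ 0 <= a, 0 <= b &
    wact M (alt x y L.+1) (alpha R s) = a *: alpha R x + b *: alpha R y].
Proof.
move=> xy s_in asc.
have s_last : s = alt_letter x y L.+1.
  apply: (eq_of_mem2 s_in (alt_letter_in _ _ _) (alt_letter_in x y L)).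
    apply/eqP => E; apply: (not_ascent_last M_diag (l0 := alt x y L) _ _ asc).
      by rewrite alt_rcons E.
    by rewrite !size_alt.
  exact: alt_letter_neq.
have nn k : (k <= L.+2)%N -> cheb_nonneg (- M x y) (- M y x) k.
  case: (M_admissible xy) => [nn_all | [m [m0 nn_m hxy hyx D]]] kL; first exact: nn_all.
  have [Lm | mL] := leqP L.+2 m; first exact: nn_m (leq_trans kL Lm).
  case: m m0 hxy hyx mL {nn_m} D => // m _ hxy hyx mL D.
  have D' : M x y * M y x != 4 by rewrite -mulrNN.
  have [r er szr] := alt_shorten (braid M_diag xy hxy hyx D') (ltnSE mL).
  have := asc r; rewrite er alt_rcons -s_last szr size_alt => /(_ erefl).
  by rewrite ltnn.
rewrite s_last wact_alt_alpha //.
exists (cheb L.+2 (- M x y) (- M y x)), (cheb L.+1 (- M y x) (- M x y)).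
by split; [exact: (nn _ (leqnn _)).1 | exact: (nn _ (leqnSn _)).2 |].
Qed.

Lemma parabolic_factor w s s' : reduced M w ->
  exists p q : seq 'I_n, [/\ all (mem [:: s; s']) q, wact M (p ++ q) = wact M w,
    size (p ++ q) = size w & forall t, t \in [:: s; s'] -> ascent M p t].
Proof.
move=> red.
pose A : set nat := [set k | exists p q, [/\ size p = k, all (mem [:: s; s']) q,
  wact M (p ++ q) = wact M w & size (p ++ q) = size w]]%classic.
have A_w : A (size w) by exists w, [::]; rewrite cats0.
have [_ [[p [q [<- q_in e sz]]] min_p]] := nat_has_minimum (ex_intro _ _ A_w).
exists p, q; split => // t t_in p' e'; rewrite leqNgt; apply/negP => lt_p'p.
have e2 : wact M (p' ++ t :: q) = wact M w.
  by rewrite wact_cat e' -wact_cat cat_rcons wact_cat wact_cons2 // -wact_cat e.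
have sz2 : size (p' ++ t :: q) = size w.
  by have := red _ e2; move: sz lt_p'p; rewrite !size_cat /=; lia.
have /min_p : A (size p') by exists p', (t :: q); split; rewrite //= t_in.
by rewrite leqNgt lt_p'p.
Qed.

Theorem ascent_root_nonneg l s :
  reduced M l -> ascent M l s -> nonneg (wact M l (alpha R s)).
Proof.
have [N] := ubnP (size l); elim: N l s => // N IH l s.
case/lastP: l => [|l0 s'] lt_lN red asc; first exact: alpha_nonneg.
have ss' : s != s'.
  apply/eqP => E; rewrite E in asc.
  exact: (not_ascent_last M_diag (l0 := l0) erefl (size_rcons _ _) asc).
have [p [q [q_in e sz asc_p]]] := parabolic_factor s s' red.
have red_pq : reduced M (p ++ q) by move=> l' e'; rewrite sz; apply: red; rewrite e' e.
have q_ne : (0 < size q)%N.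
  rewrite lt0n size_eq0; apply/eqP => q0; rewrite q0 cats0 in e sz.
  apply: (not_ascent_last M_diag e _ (asc_p s' _)); by rewrite ?sz ?size_rcons // !inE eqxx orbT.
have p_nonneg t : t \in [:: s; s'] -> nonneg (wact M p (alpha R t)).
  move=> t_in; apply: IH (reduced_catl red_pq) (asc_p t t_in).
  by move: sz lt_lN q_ne; rewrite size_cat size_rcons; lia.
have sqf q1 q2 a : q <> q1 ++ a :: a :: q2.
  by move=> E; have := reduced_catr red_pq; rewrite E; exact: not_reduced_square.
have [x [y [eq_q xy sub]]] := square_free_alt ss' q_in sqf.
have s_in : s \in [:: x; y].
  rewrite !inE; apply: contraT; rewrite negb_or => /andP[sx sy].
  rewrite -(negbTE xy); apply/eqP.
  by apply: (eq_of_mem2 (c := s) (sub x _) (sub y _)); rewrite ?inE ?eqxx ?orbT // eq_sym.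
have asc_q := ascent_catr e sz asc.
move: eq_q q_ne asc_q e; case: (size q) => // L -> _ asc_q e.
have [a [b [a0 b0 Eq]]] := alt_ascent_alpha xy s_in asc_q.
move=> k; rewrite -e wact_cat /comp Eq linearD !linearZ /=.
by apply: addr_ge0; apply: mulr_ge0 => //; apply: p_nonneg; apply: sub; rewrite !inE eqxx ?orbT.
Qed.

Lemma root_nonneg_or_nonpos l a :
  nonneg (wact M l (alpha R a)) \/ nonneg (- wact M l (alpha R a)).
Proof.
have [l1 e1 red1] := exists_reduced M l.
have [r er red_r] := exists_reduced M (rcons l1 a).
have [le_l1r | lt_rl1] := leqP (size l1) (size r).
  left; rewrite -e1; apply: ascent_root_nonneg red1 _ => l' e.
  exact: leq_trans le_l1r (red_r l' (etrans e (esym er))).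
have e_l1 : wact M (rcons r a) = wact M l1 by rewrite wact_rcons er -wact_rcons wact_rcons2.
have nn_r : nonneg (wact M r (alpha R a)).
  apply: ascent_root_nonneg red_r _ => l' e.
  by rewrite ltnW // (leq_trans lt_rl1) // red1 // e e_l1.
right => k; rewrite -e1 -e_l1 wact_rcons /= refl_alpha_self // linearN opprK.
exact: nn_r.
Qed.

End PositiveRoots.

(** * E-generalized Cartan matrices are admissible *)

Section Admissibility.
Variable R : realType.

Lemma cheb_nonneg_ge4 (A B : R) : 0 < A -> 0 < B -> 4 <= A * B ->
  forall k, cheb_nonneg A B k.
Proof.
move=> A0 B0 AB4.
suff growth k : (0 <= cheb k A B /\ 2 * cheb k A B <= A * cheb k.+1 B A) /\
                (0 <= cheb k B A /\ 2 * cheb k B A <= B * cheb k.+1 A B).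
  by move=> k; have [[? _] [? _]] := growth k.
elim: k => [|k [[hAB gAB] [hBA gBA]]].
  by rewrite !cheb0 !cheb1 mulr0 !mulr1 !lexx !ltW.
have hAB1 : 0 <= cheb k.+1 A B by rewrite -(pmulr_rge0 _ B0); lra.
have hBA1 : 0 <= cheb k.+1 B A by rewrite -(pmulr_rge0 _ A0); lra.
rewrite !chebSS; split; split => //.
- have : 0 <= A * (B * cheb k.+1 A B - 2 * cheb k B A) by apply: mulr_ge0; lra.
  have : 0 <= (A * B - 4) * cheb k.+1 A B by apply: mulr_ge0; lra.
  nra.
- have : 0 <= B * (A * cheb k.+1 B A - 2 * cheb k A B) by apply: mulr_ge0; lra.
  have : 0 <= (A * B - 4) * cheb k.+1 B A by apply: mulr_ge0; lra.
  nra.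
Qed.

Lemma cheb_sin (th : R) k : cos th != 0 -> forall A B : R, A * B = 4 * cos th ^+ 2 ->
  cheb k A B * sin th = (if odd k then 1 else A / (2 * cos th)) * sin (k%:R * th).
Proof.
move=> c0.
have sinSS j : sin (j.+2%:R * th) = 2 * cos th * sin (j.+1%:R * th) - sin (j%:R * th).
  have -> : j.+2%:R * th = j.+1%:R * th + th by rewrite -addn1 natrD mulrDl mul1r.
  have -> : j%:R * th = j.+1%:R * th - th by rewrite -addn1 natrD mulrDl mul1r addrK.
  rewrite sinD sinB; ring.
suff both : forall A B : R, A * B = 4 * cos th ^+ 2 ->
    cheb k A B * sin th = (if odd k then 1 else A / (2 * cos th)) * sin (k%:R * th) /\
    cheb k.+1 A B * sin th = (if odd k.+1 then 1 else A / (2 * cos th)) * sin (k.+1%:R * th).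
  by move=> A B AB; have [] := both A B AB.
elim: k => [|k IH] A B AB.
  by split; rewrite ?cheb0 ?cheb1 /= ?(mul0r, sin0, mulr0) ?mul1r.
have [_ IH1] := IH A B AB; split => //.
have BA : B * A = 4 * cos th ^+ 2 by rewrite mulrC.
have [_ IH2] := IH B A BA; have [IH3 _] := IH A B AB.
rewrite chebSS mulrBl -mulrA IH2 IH3 sinSS /=.
move: AB; case: (odd k) => /= AB.
- by rewrite !mulrA AB; field.
- by field.
Qed.

Lemma cheb_admissible_cos (m : nat) (A B : R) : (2 < m)%N -> 0 <= A -> 0 <= B ->
  A * B = 4 * cos (pi / m%:R) ^+ 2 -> cheb_admissible A B.
Proof.
move=> m3 A0 B0 AB; right; exists m.
set th : R := pi / m%:R in AB *.
have m0 : 0 < m%:R :> R by rewrite ltr0n (ltn_trans _ m3).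
have th0 : 0 < th by rewrite divr_gt0 // pi_gt0.
have mth : m%:R * th = pi by rewrite /th mulrC divfK // gt_eqF.
have th2 : th < pi / 2 by rewrite ltr_pM2l ?pi_gt0 // ltf_pV2 ?posrE // ltr_nat.
have c0 : 0 < cos th by apply: cos_gt0_pihalf; apply/andP; split; lra.
have s0 : 0 < sin th by apply: sin_gt0_pi; apply/andP; split => //; have := pi_gt0 R; lra.
have AB0 : 0 < A * B by rewrite AB mulr_gt0 // exprn_gt0.
have A0' : 0 < A by rewrite lt_def A0 andbT; apply: contraTneq AB0 => ->; rewrite mul0r ltxx.
have BA : B * A = 4 * cos th ^+ 2 by rewrite mulrC.
have cheb_sinE k (A' B' : R) : A' * B' = 4 * cos th ^+ 2 ->
    cheb k A' B' = (if odd k then 1 else A' / (2 * cos th)) * sin (k%:R * th) / sin th.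
  by move=> E; rewrite -(cheb_sin k (lt0r_neq0 c0) E) mulfK // lt0r_neq0.
have B0' : 0 < B by rewrite lt_def B0 andbT; apply: contraTneq AB0 => ->; rewrite mulr0 ltxx.
split.
- exact: ltn_trans m3.
- move=> k km.
  have sin_k : 0 <= sin (k%:R * th).
    apply: sin_ge0_pi; apply/andP; split; first by rewrite mulr_ge0 // ltW.
    by rewrite -mth ler_wpM2r ?ler_nat // ltW.
  have coef (A' : R) : 0 < A' -> 0 <= (if odd k then 1 else A' / (2 * cos th)).
    by move=> A'0; case: ifP => _; rewrite ?divr_ge0 ?mulr_ge0 ?ltW.
  by split; rewrite cheb_sinE // divr_ge0 ?(ltW s0) // mulr_ge0 // coef.
- by rewrite cheb_sinE // mth sinpi mulr0 mul0r.
- by rewrite cheb_sinE // mth sinpi mulr0 mul0r.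
- rewrite AB; apply/eqP => c1.
  have := cos2Dsin2 th; have := exprn_gt0 2 s0; lra.
Qed.

Lemma cheb_admissible0 : cheb_admissible (0 : R) 0.
Proof.
right; exists 2%N; split => //; last by rewrite mul0r eq_sym pnatr_eq0.
- by case=> [|[|[|]]] //; rewrite /cheb_nonneg chebSS mul0r cheb0 subr0.
- by rewrite chebSS mul0r cheb0 subr0.
- by rewrite chebSS mul0r cheb0 subr0.
Qed.

Lemma EGCM_cheb_admissible n (M : 'M[R]_n) :
  EGCM M -> forall x y, x != y -> cheb_admissible (- M x y) (- M y x).
Proof.
case=> _ [M_le [M_sym M_prod]] x y xy.
have A0 : 0 <= - M x y by rewrite oppr_ge0 M_le.
have B0 : 0 <= - M y x by rewrite oppr_ge0 M_le // eq_sym.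
have [P0 | P0] := eqVneq (M x y * M y x) 0.
  have M_zero a b : M a b = 0 -> M b a = 0.
    by move=> E; case: (eqVneq (M b a) 0) => // /(M_sym a b).2; rewrite E eqxx.
  have [-> ->] : M x y = 0 /\ M y x = 0.
    have /orP[/eqP E|/eqP E] : (M x y == 0) || (M y x == 0) by rewrite -mulf_eq0 P0.
    - by rewrite E M_zero.
    - by rewrite E M_zero.
  by rewrite oppr0; exact: cheb_admissible0.
have [ge4 | [m [m3 Em]]] := M_prod x y xy P0; last first.
  by apply: (cheb_admissible_cos m3 A0 B0); rewrite mulrNN.
left; apply: cheb_nonneg_ge4; rewrite ?mulrNN // lt_def ?A0 ?B0 oppr_eq0 andbT.
- by apply: contraNneq P0 => ->; rewrite mul0r.
- by apply: contraNneq P0 => ->; rewrite mulr0.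
Qed.

End Admissibility.

(** * The numbers game *)

Section Game.
Variables (R : realType) (n : nat) (M : 'M[R]_n).
Variables (lam : 'I_n -> R) (g : nat -> 'I_n).

Definition game_word (t : nat) : seq 'I_n := [seq g k | k <- iota 0 t].

Lemma game_wordS t : game_word t.+1 = rcons (game_word t) (g t).
Proof. by rewrite /game_word -addn1 iotaD map_cat cats1. Qed.

Lemma betaE t : beta M g t = wact M (game_word t) (alpha R (g t)).
Proof. by []. Qed.

Lemma root_functional_refl i u x :
  root_functional (refl M i u) x = root_functional u (fire M i x).
Proof.
rewrite /root_functional.
rewrite (eq_bigr (fun j => u j * x j - coroot M i u * (alpha R i j * x j))); last first.
  by move=> j _; rewrite /refl -/(coroot M i u); ring.
rewrite [RHS](eq_bigr (fun j => u j * x j - x i * (M i j * u j))); last first.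
  by move=> j _; rewrite /fire; ring.
rewrite !sumrB -!mulr_sumr -/(root_functional (alpha R i) x) root_functional_of_alpha.
by rewrite mulrC.
Qed.

Lemma root_functional_game_word t u :
  root_functional (wact M (game_word t) u) lam = root_functional u (play M lam g t).
Proof.
by elim: t u => // t IH u; rewrite game_wordS wact_rcons /= IH root_functional_refl.
Qed.

Lemma root_functional_beta t : root_functional (beta M g t) lam = play M lam g t (g t).
Proof. by rewrite root_functional_game_word root_functional_of_alpha. Qed.

Hypothesis M_diag : forall i, M i i = 2.
Hypothesis M_admissible : forall x y, x != y -> cheb_admissible (- M x y) (- M y x).

Lemma game_beta_pullback_nonpos t :
  (forall u, (u < t)%N -> 0 < play M lam g u (g u)) ->
  forall m, (m < t)%N -> nonneg (- wact M (rev (game_word t)) (beta M g m)).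
Proof.
elim: t => [//|t IH] legal m.
rewrite ltnS leq_eqVlt game_wordS rev_rcons => /orP[/eqP -> | lt_mt] /=.
  by rewrite betaE wact_revK // refl_alpha_self // opprK; exact: alpha_nonneg.
set v := wact M (rev (game_word t)) (beta M g m).
have v_le0 : nonneg (- v) by apply: IH lt_mt => u ut; apply: legal; rewrite ltnW.
have [rv_ge0 | //] : nonneg (refl M (g t) v) \/ nonneg (- refl M (g t) v).
  have := root_nonneg_or_nonpos M_diag M_admissible (g t :: rev (game_word t) ++ game_word m) (g m).
  by rewrite /= wact_cat.
have v_eq := nonpos_refl_nonneg v_le0 rv_ge0; set c := v (g t) in v_eq.
have beta_m : beta M g m = c *: beta M g t.
  by rewrite -(wact_Krev M_diag (game_word t) (beta M g m)) -/v v_eq linearZ.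
have := root_functional_beta m.
rewrite beta_m root_functional_scale root_functional_beta => play_m.
have := legal m (ltnW lt_mt); have := legal t (ltnSn t); have := v_le0 (g t).
rewrite -/c -play_m oppr_ge0 => c_le0 play_t play_m_gt0.
by have := mulr_le0_ge0 c_le0 (ltW play_t); rewrite leNgt play_m_gt0.
Qed.

End Game.

Theorem proposition5p4 (R : realType) (n : nat) (M : 'M[R]_n)
    (lam : 'I_n -> R) (len : option nat) (g : nat -> 'I_n) :
  EGCM M -> strongly_dominant lam -> game_sequence M lam len g ->
  forall j k : nat, (j < k)%N -> in_range len k ->
    root_functional (beta M g k) <> root_functional (beta M g j).
Proof.
move=> egcm _ [legal _] j k lt_jk k_in eq_phi.
have M_diag : forall i, M i i = 2 by case: egcm.
have legal_k u : (u < k)%N -> 0 < play M lam g u (g u).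
  by move=> lt_uk; apply: legal; case: len k_in => //= N; apply: ltn_trans.
have eq_beta : beta M g k = beta M g j.
  by apply/funext => i; rewrite -!(root_functional_alpha _ i) eq_phi.
have := game_beta_pullback_nonpos M_diag (EGCM_cheb_admissible egcm) legal_k lt_jk (g k).
by rewrite -eq_beta betaE wact_revK // opprfctE /alpha eqxx oppr_ge0 ler10.
Qed.
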